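(* For every $n\in\mathcal{N}_{z_q}$, \[ \{\theta(\gamma):\gamma\in\Gamma_{z_q,n}\}=\Bigl\{\arg(x+iy)\ :\ x,y\in\mathbb{R},\ y+ix\in\mathcal{O}_K,\ N(y+ix)=n^2-4\lambda^4,\ 2y\equiv 2n \pmod{q}\Bigr\}, \] where $2y\equiv 2n\pmod q$ means $2y-2n\in q\mathbb{Z}$.
   Context: Let $q\in\{3,4,7,8,11,19,43,67,163\}$ and let $K$ be the imaginary quadratic field of discriminant $-q$ (class number one), with ring of integers $\mathcal{O}_K$ and norm $N$. Let $z_q=\mu+i\lambda$ where $\mu=0$ if $q\in\{4,8\}$, $\mu=1/2$ otherwise, and $\lambda=\sqrt{q}/2$ (so $\mathcal{O}_K=\mathbb{Z}+\mathbb{Z}z_q$). Let $\mathbb{H}$ be the upper half-plane with hyperbolic distance $\rho$, $\cosh\rho(z,w)=1+\frac{|z-w|^2}{2\,\mathrm{Im}(z)\mathrm{Im}(w)}$, and $\Gamma=\mathrm{PSL}(2,\mathbb{Z})$ acting by Möbius transformations. For $\gamma\in\Gamma$ set $\mathcal{R}(\gamma;z_q)=2\lambda^2\cosh\rho(z_q,\gamma z_q)$, $\mathcal{N}_{z_q}=\{\mathcal{R}(\gamma;z_q):\gamma\in\Gamma\}$, and $\Gamma_{z_q,n}=\{\gamma\in\Gamma:\mathcal{R}(\gamma;z_q)=n\}$. For $\gamma z_q\neq z_q$, $\theta(\gamma)\in\mathbb{R}/2\pi\mathbb{Z}$ is the angle that the tangent vector at $z_q$ of the geodesic segment from $z_q$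 to $\gamma z_q$ makes with the positive horizontal direction. *)

From Stdlib Require Import Reals List ZArith.
From Coquelicot Require Import Coquelicot.
Open Scope R_scope.

(* The nine admissible discriminants (class number one). *)
Definition admissible_q (q : nat) : Prop :=
  In q (3 :: 4 :: 7 :: 8 :: 11 :: 19 :: 43 :: 67 :: 163 :: nil)%nat.

Definition mu_q (q : nat) : R :=
  if (Nat.eqb q 4 || Nat.eqb q 8)%bool then 0 else 1/2.
Definition lambda_q (q : nat) : R := sqrt (INR q) / 2.
Definition z_q (q : nat) : C := (mu_q q, lambda_q q).

(* Elements of SL(2,Z); gamma and -gamma act identically on H, so
   quantifying over SL(2,Z) is the same as quantifying over PSL(2,Z). *)
Record SL2Z := mkSL2Z {
  ma : Z; mb : Z; mc : Z; md : Z;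
  mdet : (ma * md - mb * mc = 1)%Z }.

Definition ZtoC (k : Z) : C := RtoC (IZR k).

Definition moeb (g : SL2Z) (z : C) : C :=
  Cdiv (Cplus (Cmult (ZtoC (ma g)) z) (ZtoC (mb g)))
       (Cplus (Cmult (ZtoC (mc g)) z) (ZtoC (md g))).

(* cosh of the hyperbolic distance on the upper half plane. *)
Definition cosh_rho (z w : C) : R :=
  1 + (Cmod (Cminus z w)) ^ 2 / (2 * Im z * Im w).

Definition Rval (q : nat) (g : SL2Z) : R :=
  2 * (lambda_q q) ^ 2 * cosh_rho (z_q q) (moeb g (z_q q)).

Definition Nset (q : nat) (n : R) : Prop := exists g : SL2Z, Rval q g = n.

(* Tangent vector at z (in the upper half plane) of the hyperbolic geodesic
   segment from z to w (w <> z).  If Re w = Re z the geodesic is the vertical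
   line; otherwise it is the Euclidean semicircle centred at the point c of
   the real axis equidistant from z and w, and the tangent at z is
   perpendicular to z - c, oriented towards w (moving counterclockwise on the
   semicircle, i.e. direction i (z - c), decreases the real part). *)
Definition geod_tangent (z w : C) : C :=
  if Req_EM_T (Re w) (Re z) then
    (if Rlt_dec (Im z) (Im w) then (0, 1) else (0, -1))
  else
    let c := ((Re w) ^ 2 + (Im w) ^ 2 - (Re z) ^ 2 - (Im z) ^ 2)
             / (2 * (Re w - Re z)) in
    if Rlt_dec (Re w) (Re z) then Cmult Ci (Cminus z (RtoC c))
    else Cmult (Copp Ci) (Cminus z (RtoC c)).

(* t is an argument (angle with the positive horizontal direction) of the
   nonzero vector v; the set of such t is a class in R / 2 pi Z. *)
Definition is_arg (v : C) (t : R) : Prop :=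
  exists r : R, 0 < r /\ v = (r * cos t, r * sin t).

(* t represents theta(gamma) (requires gamma z_q <> z_q). *)
Definition is_theta (q : nat) (g : SL2Z) (t : R) : Prop :=
  is_arg (geod_tangent (z_q q) (moeb g (z_q q))) t.

(* O_K = Z + Z z_q, and the norm N(w) = |w|^2. *)
Definition in_OK (q : nat) (w : C) : Prop :=
  exists a b : Z, w = Cplus (ZtoC a) (Cmult (ZtoC b) (z_q q)).
Definition normK (w : C) : R := (Re w) ^ 2 + (Im w) ^ 2.

(* Let T and N be the trace and norm of z_q and f(X, Y) = |X z_q + Y|^2 = N X^2 + T X Y + Y^2,
   a form of discriminant -q.  For g in SL(2, Z), g z_q is the root (-B + i sqrt q) / (2A) in
   the upper half plane of A w^2 + B w + C, where [A, B, C] is the transform of f by g.  Hence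
   n = 2 lam^2 cosh rho(z_q, g z_q) = A |z_q|^2 + B Re z_q + C, and the geodesic from z_q to
   g z_q leaves z_q in the direction i conj(w), where w = A zbar_q^2 + B zbar_q + C lies in O_K,
   has norm n^2 - 4 lam^4 and real part n - A q / 2.  Conversely every such w arises from a
   form [A, B, C] of discriminant -q with A > 0, and as the class number is one, Gauss
   reduction brings that form to the principal one, i.e. it is a transform of f. *)

From Stdlib Require Import Reals List ZArith.
From Coquelicot Require Import Coquelicot.
From Stdlib Require Import Lra Lia Psatz Zwf.
Open Scope R_scope.

Section PrincipalOrbit.
Local Open Scope Z_scope.
Variables T N : Z.

(* For g = [[a, b], [c, d]]: A = f(c, d), C = f(a, b), and B is minus the polar form of f
   at (a, b), (c, d); with this sign g z_q = (-B + i sqrt q) / (2A). *)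
Definition orbit_A (g : SL2Z) : Z := mc g * mc g * N + mc g * md g * T + md g * md g.
Definition orbit_B (g : SL2Z) : Z :=
  - (2 * ma g * mc g * N + (ma g * md g + mb g * mc g) * T + 2 * mb g * md g).
Definition orbit_C (g : SL2Z) : Z := ma g * ma g * N + ma g * mb g * T + mb g * mb g.

Definition principal_orbit (A B : Z) : Prop :=
  exists g : SL2Z, orbit_A g = A /\ orbit_B g = B.

Definition reduced_forms_principal : Prop :=
  forall A B C, 1 <= A <= C -> -A <= B <= A -> B*B - 4*A*C = T*T - 4*N -> A = 1.

Lemma orbit_disc g : orbit_B g * orbit_B g - 4 * orbit_A g * orbit_C g = T*T - 4*N.
Proof.
  destruct g as [a b c d Hdet]; unfold orbit_A, orbit_B, orbit_C; cbn [ma mb mc md].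
  transitivity ((a*d - b*c)^2 * (T*T - 4*N)); [ring | rewrite Hdet; ring].
Qed.

Lemma orbit_A_pos g : 0 < 4*N - T*T -> 0 < orbit_A g.
Proof.
  intro Hneg. destruct g as [a b c d Hdet]; unfold orbit_A; cbn [ma mb mc md].
  destruct (Z.eq_dec c 0) as [-> | Hc]; [nia |].
  assert (H4 : 4 * (c*c*N + c*d*T + d*d) = (2*d + c*T)^2 + (4*N - T*T) * (c*c)) by ring.
  assert (0 < c*c) by nia. assert (0 <= (2*d + c*T)^2) by nia. nia.
Qed.

Lemma principal_orbit_shift A B k :
  principal_orbit A B -> principal_orbit A (B - 2*k*A).
Proof.
  intros [[a b c d Hdet] [HA HB]]; unfold orbit_A, orbit_B in *; cbn [ma mb mc md] in *.
  exists (mkSL2Z (a + k*c) (b + k*d) c d ltac:(nia)).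
  unfold orbit_A, orbit_B; cbn [ma mb mc md]; split; [lia | subst; ring].
Qed.

Lemma principal_orbit_swap A B C :
  A <> 0 -> B*B - 4*A*C = T*T - 4*N ->
  principal_orbit A B -> principal_orbit C (- B).
Proof.
  intros HA0 Hdisc [g [HA HB]].
  pose proof (orbit_disc g) as Hdisc_g; rewrite HA, HB in Hdisc_g.
  destruct g as [a b c d Hdet]; unfold orbit_A, orbit_B, orbit_C in *; cbn [ma mb mc md] in *.
  exists (mkSL2Z c d (-a) (-b) ltac:(nia)).
  unfold orbit_A, orbit_B; cbn [ma mb mc md]; split; [| lia].
  assert (HAC : A * (a*a*N + a*b*T + b*b - C) = 0) by nia.
  apply Z.mul_eq_0 in HAC as [|]; lia.
Qed.

Lemma principal_orbit_one B C :
  (T = 0 \/ T = 1) -> B*B - 4*C = T*T - 4*N -> principal_orbit 1 B.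
Proof.
  intros HT Hdisc.
  assert (HBT : exists m, B = 2*m + T).
  { destruct (Z.Even_or_Odd B) as [[m Hm] | [m Hm]]; exists m;
      destruct HT; subst; nia. }
  destruct HBT as [m Hm].
  exists (mkSL2Z 1 (- m - T) 0 1 ltac:(lia)).
  unfold orbit_A, orbit_B; cbn [ma mb mc md]; destruct HT; subst; lia.
Qed.

Lemma shift_into_range A B : 0 < A -> exists k, -A <= B - 2*k*A <= A.
Proof.
  intro HA. exists ((B + A) / (2*A)).
  pose proof (Z.mod_pos_bound (B + A) (2*A) ltac:(lia)).
  pose proof (Z.div_mod (B + A) (2*A) ltac:(lia)). lia.
Qed.

(* Gauss reduction: alternately shift B into [-A, A] and swap A with C; this
   decreases A until the form is reduced. *)
Lemma principal_orbit_all :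
  (T = 0 \/ T = 1) -> reduced_forms_principal -> 0 < 4*N - T*T ->
  forall A B C, 0 < A -> B*B - 4*A*C = T*T - 4*N -> principal_orbit A B.
Proof.
  intros HT Hred Hneg A.
  induction A as [A IH] using (well_founded_induction (Zwf_well_founded 0)).
  intros B C HA Hdisc.
  destruct (shift_into_range A B HA) as [k Hk].
  set (B1 := B - 2*k*A) in *.
  set (C1 := C - k*B + k*k*A).
  assert (Hdisc1 : B1*B1 - 4*A*C1 = T*T - 4*N) by (unfold B1, C1; nia).
  replace B with (B1 - 2*(-k)*A) by (unfold B1; ring).
  apply principal_orbit_shift.
  destruct (Z_lt_le_dec C1 A) as [HC1 | HC1].
  - rewrite <- (Z.opp_involutive B1).
    apply (principal_orbit_swap C1 (- B1) A); [nia | nia |].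
    apply (IH C1 ltac:(unfold Zwf; nia) (- B1) A); nia.
  - assert (A = 1) by (apply (Hred A B1 C1); lia). subst A.
    apply (principal_orbit_one B1 C1); lia.
Qed.

End PrincipalOrbit.

(* A reduced form satisfies 3 A^2 <= 4 A C - B^2 <= 163, so A <= 7. *)
Ltac enumerate_reduced_forms :=
  let A := fresh "A" in let B := fresh "B" in let C := fresh "C" in
  intros A B C HAC HB Hdisc;
  assert (HA : (A <= 7)%Z) by nia;
  assert (HAs : A = 1%Z \/ A = 2%Z \/ A = 3%Z \/ A = 4%Z \/ A = 5%Z \/ A = 6%Z \/ A = 7%Z) by lia;
  assert (HBs : B = (-7)%Z \/ B = (-6)%Z \/ B = (-5)%Z \/ B = (-4)%Z \/ B = (-3)%Z \/ B = (-2)%Z \/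
     B = (-1)%Z \/ B = 0%Z \/ B = 1%Z \/ B = 2%Z \/ B = 3%Z \/ B = 4%Z \/ B = 5%Z \/ B = 6%Z \/ B = 7%Z) by lia;
  clear HA; intuition subst; lia.

Lemma admissible_q_data q : admissible_q q ->
  exists T N : Z, (T = 0 \/ T = 1)%Z /\ INR q = IZR (4*N - T*T) /\
    mu_q q = IZR T / 2 /\ (0 < 4*N - T*T)%Z /\ reduced_forms_principal T N.
Proof.
  intros Hq; repeat destruct Hq as [<- | Hq]; [
    exists 1%Z, 1%Z | exists 0%Z, 1%Z | exists 1%Z, 2%Z | exists 0%Z, 2%Z |
    exists 1%Z, 3%Z | exists 1%Z, 5%Z | exists 1%Z, 11%Z | exists 1%Z, 17%Z |
    exists 1%Z, 41%Z | destruct Hq ].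
  all: rewrite INR_IZR_INZ; unfold mu_q; simpl;
    repeat split; try lia; try lra; enumerate_reduced_forms.
Qed.

(* The root in the upper half plane of a w^2 + b w + c when b^2 - 4ac = -4 lam^2. *)
Definition form_point (a b lam : R) : C := (- b / (2 * a), lam / a).

Definition form_value (mu lam a b c : R) : R := a * (mu^2 + lam^2) + b * mu + c.

(* The value a zbar^2 + b zbar + c at z = mu + i lam. *)
Definition conj_value (mu lam a b c : R) : C :=
  (a * (mu^2 - lam^2) + b * mu + c, - lam * (2 * a * mu + b)).

Section FormPoint.
Variables mu lam a b c : R.
Hypothesis lam_pos : 0 < lam.

Let n := form_value mu lam a b c.
Let w := conj_value mu lam a b c.

Lemma conj_value_re : Re w = n - 2 * a * lam^2.
Proof. unfold w, n, conj_value, form_value; cbn [fst snd Re Im]; ring. Qed.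

Lemma conj_value_norm :
  normK w = n^2 - 4 * lam^4 + lam^2 * (b^2 - 4 * a * c + 4 * lam^2).
Proof. unfold w, n, normK, conj_value, form_value; cbn [fst snd Re Im]; ring. Qed.

Lemma form_leading_pos : 0 <= n -> normK w = n^2 - 4 * lam^4 -> 0 < a.
Proof.
  intros Hn Hnorm.
  assert (Hlam2 : 0 < lam^2) by (apply pow_lt; lra).
  destruct (Rlt_or_le 0 a) as [|Ha]; [assumption | exfalso].
  assert (Hre : n <= Re w) by (rewrite conj_value_re; nra).
  assert (n^2 <= (Re w)^2) by (apply pow_incr; lra).
  unfold normK in Hnorm. pose proof (pow2_ge_0 (Im w)). nra.
Qed.

Hypothesis a_pos : 0 < a.
Hypothesis disc : b^2 - 4 * a * c = -4 * lam^2.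

Let u := - b / (2 * a).
Let v := lam / a.

Lemma form_value_dist : n = 2 * lam^2 + a * ((mu - u)^2 + (lam - v)^2).
Proof.
  assert (Hc : c = (b^2 + 4 * lam^2) / (4 * a)) by (field_simplify_eq; lra).
  unfold n, u, v, form_value. rewrite Hc. field. lra.
Qed.

Lemma form_value_ge : 2 * lam^2 <= n.
Proof.
  rewrite form_value_dist. pose proof (pow2_ge_0 (mu - u)).
  pose proof (pow2_ge_0 (lam - v)). nra.
Qed.

Lemma cosh_rho_form_point : 2 * lam^2 * cosh_rho (mu, lam) (form_point a b lam) = n.
Proof.
  rewrite form_value_dist.
  unfold cosh_rho, form_point, Cmod, Cminus, Cplus, Copp; cbn [fst snd Re Im]; fold u v.
  rewrite pow2_sqrt by (pose proof (pow2_ge_0 (mu + - u)); pose proof (pow2_ge_0 (lam + - v)); nra).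
  unfold u, v. field. lra.
Qed.

Lemma form_point_eq_iff : form_point a b lam = (mu, lam) <-> w = (0, 0).
Proof.
  assert (Hlam2 : 0 < lam^2) by (apply pow_lt; lra).
  assert (Hnorm := conj_value_norm). rewrite disc in Hnorm.
  replace (lam^2 * (-4 * lam^2 + 4 * lam^2)) with 0 in Hnorm by ring.
  assert (Hdist := form_value_dist). unfold form_point; fold u v.
  destruct w as [y x]; unfold normK in Hnorm; cbn [fst snd Re Im] in Hnorm.
  split.
  - intros [= Hu Hv]. rewrite Hu, Hv in Hdist.
    assert (y^2 + x^2 = 0) by nra. f_equal; nra.
  - intros [= -> ->].
    assert (n = 2 * lam^2) by (pose proof form_value_ge; nra).
    assert (Hs : a * ((mu - u)^2 + (lam - v)^2) = 0) by lra.
    apply Rmult_integral in Hs as [Hs | Hs]; [lra |].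
    pose proof (pow2_ge_0 (mu - u)); pose proof (pow2_ge_0 (lam - v)).
    f_equal; nra.
Qed.

Lemma geod_tangent_form_point_vertical : u = mu -> form_point a b lam <> (mu, lam) ->
  exists r, 0 < r /\ geod_tangent (mu, lam) (form_point a b lam) = (r * Im w, r * Re w).
Proof.
  intros Hu Hne. unfold geod_tangent, form_point, w, conj_value; cbn [fst snd Re Im]; fold u v.
  destruct (Req_EM_T u mu) as [_ | ]; [| contradiction].
  assert (Hb : b = -2 * a * mu) by (unfold u in Hu; field_simplify_eq in Hu; lra).
  assert (Hc : c = (b^2 + 4 * lam^2) / (4 * a)) by (field_simplify_eq; lra).
  assert (Hy : a * (mu^2 - lam^2) + b * mu + c = lam^2 * (1 - a^2) / a)
    by (rewrite Hc, Hb; field; lra).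
  replace (- lam * (2 * a * mu + b)) with 0 by (rewrite Hb; ring). rewrite Hy.
  assert (Hlam2 : 0 < lam^2) by (apply pow_lt; lra).
  destruct (Rlt_dec lam v) as [Hv | Hv]; unfold v in *.
  - assert (Ha1 : a < 1).
    { apply Rmult_lt_reg_r with (lam / a); [apply Rdiv_lt_0_compat; lra |].
      replace (a * (lam / a)) with lam by (field; lra). lra. }
    assert (Hy_pos : 0 < lam^2 * (1 - a^2)) by (apply Rmult_lt_0_compat; nra).
    exists (a / (lam^2 * (1 - a^2))).
    split; [apply Rdiv_lt_0_compat; lra | f_equal; field; split; nra].
  - assert (Ha1 : 1 < a).
    { destruct (Req_dec a 1) as [-> | Ha1].
      - exfalso; apply Hne. unfold form_point. f_equal; [exact Hu | field].
      - destruct (Rlt_or_le a 1) as [Ha | Ha]; [| lra]. exfalso; apply Hv.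
        apply Rmult_lt_reg_l with a; [lra |].
        replace (a * (lam / a)) with lam by (field; lra). nra. }
    assert (Hy_neg : 0 < lam^2 * (a^2 - 1)) by (apply Rmult_lt_0_compat; nra).
    exists (a / (lam^2 * (a^2 - 1))).
    split; [apply Rdiv_lt_0_compat; lra | f_equal; field; split; nra].
Qed.

Lemma geod_tangent_form_point_arc : u <> mu ->
  exists r, 0 < r /\ geod_tangent (mu, lam) (form_point a b lam) = (r * Im w, r * Re w).
Proof.
  intro Hu. unfold geod_tangent, form_point, w, conj_value; cbn [fst snd Re Im]; fold u v.
  destruct (Req_EM_T u mu) as [ | _]; [contradiction |].
  set (ctr := (u^2 + v^2 - mu^2 - lam^2) / (2 * (u - mu))).
  assert (Hu' : u - mu <> 0) by lra.
  assert (Hc : c = (b^2 + 4 * lam^2) / (4 * a)) by (field_simplify_eq; lra).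
  (* (Im w, Re w) = 2 a (mu - u) i (z - ctr) *)
  assert (Hy : a * (mu^2 - lam^2) + b * mu + c = 2 * a * (mu - u) * (mu - ctr)).
  { unfold ctr. rewrite Hc. unfold u, v in *. field. split; [lra |].
    intro E; apply Hu'. replace (- b) with (mu * (2 * a)) by lra. field. lra. }
  assert (Hx : - lam * (2 * a * mu + b) = -2 * a * lam * (mu - u)) by (unfold u; field; lra).
  rewrite Hx, Hy. unfold Cmult, Cminus, Cplus, Copp, Ci, RtoC; cbn [fst snd].
  destruct (Rlt_dec u mu) as [Hlt | Hlt].
  - exists (/ (2 * a * (mu - u))).
    split; [apply Rinv_0_lt_compat; nra | f_equal; field; lra].
  - exists (/ (2 * a * (u - mu))).
    split; [apply Rinv_0_lt_compat; nra | f_equal; field; lra].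
Qed.

Lemma geod_tangent_form_point : form_point a b lam <> (mu, lam) ->
  exists r, 0 < r /\ geod_tangent (mu, lam) (form_point a b lam) = (r * Im w, r * Re w).
Proof.
  intro Hne. destruct (Req_dec u mu) as [Hu | Hu].
  - exact (geod_tangent_form_point_vertical Hu Hne).
  - exact (geod_tangent_form_point_arc Hu).
Qed.

End FormPoint.

Lemma lambda_q_sq q : lambda_q q ^ 2 = INR q / 4.
Proof.
  unfold lambda_q, Rdiv. rewrite Rpow_mult_distr, pow2_sqrt by apply pos_INR. field.
Qed.

Lemma is_arg_scale v1 v2 r t : 0 < r -> is_arg (r * v1, r * v2) t <-> is_arg (v1, v2) t.
Proof.
  assert (Hmul : forall r' w1 w2, 0 < r' -> is_arg (w1, w2) t -> is_arg (r' * w1, r' * w2) t).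
  { intros r' w1 w2 Hr' [s [Hs E]]; injection E as -> ->.
    exists (r' * s); split; [nra | f_equal; ring]. }
  intro Hr; split; [intro Harg | apply Hmul, Hr].
  replace v1 with (/ r * (r * v1)) by (field; lra).
  replace v2 with (/ r * (r * v2)) by (field; lra).
  apply Hmul; [apply Rinv_0_lt_compat, Hr | exact Harg].
Qed.

Section AdmissibleDiscriminant.
Variables (q : nat) (T N : Z).
Hypothesis q_disc : INR q = IZR (4*N - T*T).
Hypothesis mu_trace : mu_q q = IZR T / 2.
Hypothesis disc_neg : (0 < 4*N - T*T)%Z.

Let mu := mu_q q.
Let lam := lambda_q q.

Lemma lambda_pos : 0 < lam.
Proof.
  unfold lam, lambda_q. apply Rdiv_lt_0_compat; [apply sqrt_lt_R0 | lra].
  rewrite q_disc. apply IZR_lt. exact disc_neg.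
Qed.

Lemma lambda_sq_norm : lam ^ 2 = IZR N - mu ^ 2.
Proof.
  unfold lam, mu. rewrite lambda_q_sq, q_disc, mu_trace, minus_IZR, !mult_IZR. field.
Qed.

Lemma orbit_disc_R g :
  IZR (orbit_B T N g) ^ 2 - 4 * IZR (orbit_A T N g) * IZR (orbit_C T N g) = -4 * lam ^ 2.
Proof.
  unfold lam. rewrite lambda_q_sq, q_disc.
  pose proof (orbit_disc T N g) as Hdisc. apply (f_equal IZR) in Hdisc.
  rewrite !minus_IZR, !mult_IZR in Hdisc. rewrite !minus_IZR, !mult_IZR. nra.
Qed.

Lemma moeb_z_q g :
  moeb g (z_q q) = form_point (IZR (orbit_A T N g)) (IZR (orbit_B T N g)) lam.
Proof.
  assert (Hlam2 := lambda_sq_norm).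
  assert (HA : 0 < IZR (orbit_A T N g)) by (apply IZR_lt, orbit_A_pos; exact disc_neg).
  destruct g as [a b c d Hdet].
  assert (HdetR : IZR a * IZR d - IZR b * IZR c = 1)
    by (rewrite <- !mult_IZR, <- minus_IZR, Hdet; reflexivity).
  unfold orbit_A, orbit_B in *; cbn [ma mb mc md] in *.
  unfold moeb, form_point, z_q, ZtoC, Cdiv, Cmult, Cplus, Cinv, RtoC; cbn [ma mb mc md fst snd].
  repeat rewrite ?opp_IZR, ?plus_IZR, ?mult_IZR in *. fold mu lam.
  replace (IZR T) with (2 * mu) in * by (unfold mu; rewrite mu_trace; field).
  replace (IZR N) with (lam ^ 2 + mu ^ 2) in * by lra.
  f_equal.
  - field; nra.
  - match goal with |- _ = lam / ?D => transitivity (lam * (IZR a * IZR d - IZR b * IZR c) / D) end.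
    + field; nra.
    + rewrite HdetR; field; lra.
Qed.

Lemma in_OK_iff_conj_value (a : Z) w :
  in_OK q w <-> exists b c : Z, w = conj_value mu lam (IZR a) (IZR b) (IZR c).
Proof.
  assert (HT : IZR T = 2 * mu) by (unfold mu; rewrite mu_trace; field).
  assert (HN : IZR N = lam ^ 2 + mu ^ 2) by (rewrite lambda_sq_norm; ring).
  split; [intros (a' & b' & ->); exists (- b' - a*T)%Z, (a' + b'*T + a*N)%Z
         | intros (b & c & ->); exists ((a*T + b)*T + c - a*N)%Z, (- (a*T + b))%Z].
  all: unfold conj_value, z_q, ZtoC, Cplus, Cmult, RtoC; cbn [fst snd]; fold mu lam.
  all: repeat rewrite ?opp_IZR, ?plus_IZR, ?minus_IZR, ?mult_IZR; rewrite HT, HN.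
  all: f_equal; ring.
Qed.

Lemma Rval_pos g : 0 < Rval q g.
Proof.
  assert (Hlam := lambda_pos).
  assert (Ha : 0 < IZR (orbit_A T N g)) by (apply IZR_lt, orbit_A_pos; exact disc_neg).
  assert (Hdisc := orbit_disc_R g).
  unfold Rval. rewrite moeb_z_q. change (z_q q) with (mu, lam). fold lam.
  rewrite (cosh_rho_form_point _ _ _ _ _ Hlam Ha Hdisc).
  pose proof (form_value_ge mu lam _ _ _ Ha Hdisc). pose proof (pow_lt lam 2 Hlam). lra.
Qed.

Lemma theta_has_OK_direction g n t :
  Rval q g = n -> moeb g (z_q q) <> z_q q -> is_theta q g t ->
  exists x y : R,
    in_OK q (y, x) /\ normK (y, x) = n ^ 2 - 4 * lam ^ 4 /\
    (exists k : Z, 2 * y - 2 * n = IZR k * INR q) /\ (x, y) <> (0, 0) /\ is_arg (x, y) t.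
Proof.
  intros Hval Hmoved Htheta.
  unfold is_theta, Rval in *. rewrite moeb_z_q in *. change (z_q q) with (mu, lam) in *.
  fold lam in Hval, Hmoved, Htheta |- *.
  set (a := IZR (orbit_A T N g)) in *. set (b := IZR (orbit_B T N g)) in *.
  set (c := IZR (orbit_C T N g)). set (w := conj_value mu lam a b c).
  assert (Hlam := lambda_pos).
  assert (Ha : 0 < a) by (apply IZR_lt, orbit_A_pos; exact disc_neg).
  assert (Hdisc : b ^ 2 - 4 * a * c = -4 * lam ^ 2) by apply orbit_disc_R.
  rewrite (cosh_rho_form_point mu lam a b c Hlam Ha Hdisc) in Hval.
  exists (Im w), (Re w). repeat split.
  - apply (in_OK_iff_conj_value (orbit_A T N g)).
    exists (orbit_B T N g), (orbit_C T N g). reflexivity.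
  - rewrite <- Hval. change (Re w, Im w) with w. unfold w.
    rewrite conj_value_norm, Hdisc. ring.
  - exists (- orbit_A T N g)%Z. rewrite opp_IZR. fold a.
    unfold w. rewrite conj_value_re, Hval.
    replace (INR q) with (4 * lam ^ 2) by (unfold lam; rewrite lambda_q_sq; field). ring.
  - intros [= Hx Hy]. apply Hmoved.
    apply (form_point_eq_iff mu lam a b c Hlam Ha Hdisc). fold w.
    apply injective_projections; [exact Hy | exact Hx].
  - destruct (geod_tangent_form_point mu lam a b c Hlam Ha Hdisc Hmoved) as (r & Hr & Htan).
    rewrite Htan in Htheta. apply (is_arg_scale _ _ r); assumption.
Qed.

Hypothesis trace_01 : (T = 0 \/ T = 1)%Z.
Hypothesis class_number_one : reduced_forms_principal T N.

Lemma OK_direction_is_theta n x y t :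
  0 <= n -> in_OK q (y, x) -> normK (y, x) = n ^ 2 - 4 * lam ^ 4 ->
  (exists k : Z, 2 * y - 2 * n = IZR k * INR q) -> (x, y) <> (0, 0) -> is_arg (x, y) t ->
  exists g : SL2Z, Rval q g = n /\ moeb g (z_q q) <> z_q q /\ is_theta q g t.
Proof.
  intros Hn HOK Hnorm [k Hk] Hxy Harg.
  assert (Hlam := lambda_pos).
  assert (Hq4 : INR q = 4 * lam ^ 2) by (unfold lam; rewrite lambda_q_sq; field).
  destruct (proj1 (in_OK_iff_conj_value (- k) _) HOK) as (b & c & Hw).
  set (a := IZR (- k)) in *.
  assert (Hka : IZR k = - a) by (unfold a; rewrite opp_IZR; ring).
  rewrite Hka, Hq4 in Hk.
  assert (Hre := conj_value_re mu lam a (IZR b) (IZR c)).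
  rewrite <- Hw in Hre. change (Re (y, x)) with y in Hre.
  assert (Hval : n = form_value mu lam a (IZR b) (IZR c)) by lra.
  assert (Hdisc : IZR b ^ 2 - 4 * a * IZR c = -4 * lam ^ 2).
  { assert (Hid := conj_value_norm mu lam a (IZR b) (IZR c)).
    rewrite <- Hw, Hnorm, <- Hval in Hid.
    assert (Hz : lam ^ 2 * (IZR b ^ 2 - 4 * a * IZR c + 4 * lam ^ 2) = 0) by lra.
    apply Rmult_integral in Hz as [Hz | Hz]; [nra | lra]. }
  assert (Ha : 0 < a).
  { apply (form_leading_pos mu lam a (IZR b) (IZR c) Hlam); rewrite <- Hval; [exact Hn |].
    rewrite <- Hw. exact Hnorm. }
  assert (HdiscZ : (b * b - 4 * (- k) * c = T * T - 4 * N)%Z).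
  { assert (HqZ := q_disc). apply eq_IZR.
    rewrite !minus_IZR, !mult_IZR in *. rewrite opp_IZR, Hka. lra. }
  destruct (principal_orbit_all T N trace_01 class_number_one disc_neg (- k) b c
              (lt_IZR _ _ Ha) HdiscZ) as [g [HgA HgB]].
  assert (Hpoint : moeb g (z_q q) = form_point a (IZR b) lam)
    by (rewrite moeb_z_q, HgA, HgB; reflexivity).
  assert (Hmoved : form_point a (IZR b) lam <> (mu, lam)).
  { intro E. apply Hxy. apply (form_point_eq_iff mu lam a (IZR b) (IZR c) Hlam Ha Hdisc) in E.
    rewrite <- Hw in E. injection E as -> ->. reflexivity. }
  exists g. unfold Rval, is_theta. rewrite Hpoint. change (z_q q) with (mu, lam).
  repeat split.
  - rewrite Hval. apply cosh_rho_form_point; assumption.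
  - exact Hmoved.
  - destruct (geod_tangent_form_point mu lam a (IZR b) (IZR c) Hlam Ha Hdisc Hmoved)
      as (r & Hr & Htan).
    rewrite Htan, <- Hw. apply is_arg_scale; assumption.
Qed.

End AdmissibleDiscriminant.

Theorem proposition1p2 (q : nat) (Hq : admissible_q q) (n : R)
  (Hn : Nset q n) (t : R) :
  (exists g : SL2Z, Rval q g = n /\ moeb g (z_q q) <> z_q q /\ is_theta q g t)
  <->
  (exists x y : R,
      in_OK q (y, x) /\
      normK (y, x) = n ^ 2 - 4 * (lambda_q q) ^ 4 /\
      (exists k : Z, 2 * y - 2 * n = IZR k * INR q) /\
      (x, y) <> (0, 0) /\
      is_arg (x, y) t).
Proof.
  destruct (admissible_q_data q Hq) as (T & N & HT & Hdisc & Hmu & Hneg & Hred).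
  assert (Hn_pos : 0 <= n) by (destruct Hn as [g <-]; apply Rlt_le, (Rval_pos q T N); assumption).
  split.
  - intros (g & Hval & Hmoved & Htheta).
    exact (theta_has_OK_direction q T N Hdisc Hmu Hneg g n t Hval Hmoved Htheta).
  - intros (x & y & HOK & Hnorm & Hcong & Hxy & Harg).
    exact (OK_direction_is_theta q T N Hdisc Hmu Hneg HT Hred n x y t Hn_pos HOK Hnorm Hcong Hxy Harg).
Qed.
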